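(* Let $\Gamma$ be a finite simplicial graph satisfying (B1): for all non-adjacent $u,v\in V(\Gamma)$, $u\sim v$. Then for any $v\in V(\Gamma)$ with $\mathrm{st}(v)\ne\Gamma$, the graph $\Gamma-\mathrm{st}(v)$ is totally disconnected. In particular, there is a partial conjugation in $\mathrm{Aut}(A_\Gamma)$ of the form $c_{v,\{u\}}$ with $u\notin\mathrm{st}(v)$.
   Context: For $v\in V(\Gamma)$, $\mathrm{lk}(v)$ is the set of vertices adjacent to $v$ and $\mathrm{st}(v)=\mathrm{lk}(v)\cup\{v\}$ (also viewed as full subgraphs); $v\le w$ iff $\mathrm{lk}(v)\subset\mathrm{st}(w)$; $v\sim w$ iff $v\le w$ and $w\le v$. $A_\Gamma=\langle V(\Gamma)\mid [u,v]=1 \text{ whenever } u,v \text{ adjacent}\rangle$. For $v\in V(\Gamma)$ and a connected component $Y$ of $\Gamma-\mathrm{st}(v)$, the partial conjugation $c_{v,Y}$ maps $x\mapsto v^{-1}xv$ for $x\in Y$ and fixes the other vertices. *)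

From mathcomp Require Import all_boot.
Set Implicit Arguments. Unset Strict Implicit. Unset Printing Implicit Defensive.

Definition simplicial_graph (T : finType) (e : rel T) : Prop :=
  symmetric e /\ irreflexive e.

Section Graph.
Variables (T : finType) (e : rel T).

Definition lk (v : T) : {set T} := [set w | e v w].
Definition st (v : T) : {set T} := v |: lk v.

Definition vle (v w : T) : bool := lk v \subset st w.
Definition vsim (v w : T) : bool := vle v w && vle w v.

Definition induced (S : {set T}) : rel T :=
  [rel x y | [&& x \in S, y \in S & e x y]].

Definition component (S : {set T}) (x : T) : {set T} :=
  [set y | connect (induced S) x y].

Definition totally_disconnected (S : {set T}) : Prop :=
  forall x, x \in S -> component S x = [set x].

Definition minus_st (v : T) : {set T} := ~: st v.
End Graph.

From mathcomp Require Import all_boot.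

Set Implicit Arguments.
Unset Strict Implicit.
Unset Printing Implicit Defensive.

(* Under (B1) every u outside st(v) satisfies u <= v, i.e. lk(u) lies in st(v);
   so no edge of Γ joins two vertices of Γ - st(v). *)

Section TotallyDisconnected.
Variables (T : finType) (e : rel T).

Lemma component_edgeless (S : {set T}) (x : T) :
  (forall y z, ~~ induced e S y z) -> component e S x = [set x].
Proof.
move=> edgeless; apply/setP => y; rewrite !inE.
apply/idP/idP => [|/eqP ->]; last exact: connect0.
case/connectP => [[|z p] /=]; first by move=> _ ->.
by case/andP => exz; move: (edgeless x z); rewrite exz.
Qed.

Lemma totally_disconnected_edgeless (S : {set T}) :
  (forall y z, ~~ induced e S y z) -> totally_disconnected e S.
Proof. by move=> edgeless x _; exact: component_edgeless. Qed.

Lemma lk_in_st_of_vle (u v z : T) : vle e u v -> e u z -> z \in st e v.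
Proof. by move=> /subsetP uv euz; apply: uv; rewrite inE. Qed.

Lemma minus_st_edgeless (v : T) :
  (forall u, u \notin st e v -> vle e u v) ->
  forall y z, ~~ induced e (minus_st e v) y z.
Proof.
move=> le_v y z; apply/negP => /and3P [y_out z_out eyz].
have y_le_v : vle e y v by apply: le_v; rewrite inE in y_out.
by rewrite inE (lk_in_st_of_vle y_le_v eyz) in z_out.
Qed.

Hypothesis e_sym : symmetric e.

Lemma vle_of_B1 (v u : T) :
  (forall u w : T, u != w -> ~~ e u w -> vsim e u w) ->
  u \notin st e v -> vle e u v.
Proof.
move=> B1; rewrite !inE negb_or => /andP [uv evu].
have vu : ~~ e u v by rewrite e_sym.
by case/andP: (B1 u v uv vu).
Qed.

End TotallyDisconnected.

Lemma exists_notin_st (T : finType) (e : rel T) (v : T) :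
  st e v != [set: T] -> exists u, u \notin st e v.
Proof.
move=> st_proper; apply/existsP; apply: contraR st_proper => /existsPn all_in.
by apply/eqP/setP => w; rewrite in_setT (negbNE (all_in w)).
Qed.

Theorem lemma3p5 (T : finType) (e : rel T) :
  simplicial_graph e ->
  (* (B1): all non-adjacent distinct u, w satisfy u ~ w *)
  (forall u w : T, u != w -> ~~ e u w -> vsim e u w) ->
  forall v : T, st e v != [set: T] ->
    totally_disconnected e (minus_st e v) /\
    (* a partial conjugation c_{v,{u}}: {u} is a connected component of Γ - st(v) *)
    exists u : T, u \notin st e v /\ component e (minus_st e v) u = [set u].
Proof.
move=> [e_sym _] B1 v st_proper.
have edgeless := minus_st_edgeless (fun u => vle_of_B1 e_sym B1).
split; first exact: totally_disconnected_edgeless.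
have [u u_out] := exists_notin_st st_proper.
by exists u; split => //; exact: component_edgeless.
Qed.
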